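(* Let $F$ be a Gårding–Dirichlet polynomial of degree $M$ on $\mathrm{Sym}^2(\mathbb{R}^n)$ with $I$-eigenvalues $\lambda^F(A)=(\lambda^F_1(A),\dots,\lambda^F_M(A))$, defined by $F(tI+A)=F(I)\prod_{j=1}^M(t+\lambda^F_j(A))$. Let $p$ be a universal G-D polynomial of degree $N$ in $M$ variables, with $e$-eigenvalues $\Lambda_1(\lambda),\dots,\Lambda_N(\lambda)$ defined by $p(te+\lambda)=p(e)\prod_{j=1}^N(t+\Lambda_j(\lambda))$, and Gårding cone $\Gamma_p$. Define $P_F(A)=p(\lambda^F(A))$ for $A\in\mathrm{Sym}^2(\mathbb{R}^n)$. Then $P_F$ is a Gårding–Dirichlet polynomial of degree $N$ on $\mathrm{Sym}^2(\mathbb{R}^n)$ whose $I$-eigenvalues are $\lambda^{P_F}_j(A)=\Lambda_j(\lambda^F(A))$, $j=1,\dots,N$, and whose Gårding cone is $\Gamma_{P_F}=(\lambda^F)^{-1}(\Gamma_p)$. Moreover, if $F$ is real invariant, so is $P_F$.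
   Context: $\mathrm{Sym}^2(\mathbb{R}^n)$ is the space of real symmetric $n\times n$ matrices. A Gårding–Dirichlet (G-D) polynomial of degree $N$ on $\mathrm{Sym}^2(\mathbb{R}^n)$ is a real homogeneous polynomial $F$ of degree $N$ with $F(I)>0$ such that for every $A$ the polynomial $t\mapsto F(tI+A)$ has only real roots, and whose Gårding cone $\Gamma$ — the connected component of $\{A: F(A)\ne 0\}$ containing $I$ — contains all positive definite matrices. Real invariant means $F(gAg^t)=F(A)$ for all $g\in O(n)$. A universal G-D polynomial in $M$ variables is a symmetric homogeneous real polynomial $p$ on $\mathbb{R}^M$ with $p(e)>0$ ($e=(1,\dots,1)$), all coefficients $\ge0$, $\partial p/\partial\lambda_j(e)=k>0$ independent of $j$, which is Gårding hyperbolic with respect to $e$ ($t\mapsto p(te+\lambda)$ has only real roots for all $\lambda$); its Gårding cone $\Gamma_p$ is the connected component of $\{p\neq0\}$ containing $e$. *)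

From HB Require Import structures.
From mathcomp Require Import all_boot all_order all_algebra.
From mathcomp Require Import mpoly.
From mathcomp Require Import boolp classical_sets reals topology normedtype.
From mathcomp Require Import matrix_topology.

Set Implicit Arguments.
Unset Strict Implicit.
Unset Printing Implicit Defensive.

Import Order.TTheory GRing.Theory Num.Theory.
Import numFieldNormedType.Exports.
Local Open Scope ring_scope.
Local Open Scope classical_set_scope.

Section GardingDirichlet.
Variable R : realType.

Definition symmx {n} (A : 'M[R]_n) : Prop := A^T = A.

Definition posdef {n} (A : 'M[R]_n) : Prop :=
  symmx A /\ forall v : 'rV[R]_n, v != 0 -> 0 < (v *m A *m v^T) 0 0.

Definition mx_eval {n} (q : mpoly.mpoly (n * n) R) (A : 'M[R]_n) : R :=
  mpoly.meval (fun i => mxvec A 0 i) q.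

Definition rv_eval {M} (p : mpoly.mpoly M R) (v : 'rV[R]_M) : R :=
  mpoly.meval (fun i => v 0 i) p.

Definition e_vec {M} : 'rV[R]_M := const_mx 1.

Definition homog_poly_on_sym n (N : nat) (F : 'M[R]_n -> R) : Prop :=
  exists q : mpoly.mpoly (n * n) R,
    q \is N.-homog /\ forall A, symmx A -> F A = mx_eval q A.

Definition real_rooted (g : R -> R) : Prop :=
  exists (c : R) (s : seq R), forall t, g t = c * \prod_(x <- s) (t - x).

Definition garding_cone n (F : 'M[R]_n -> R) : set 'M[R]_n :=
  connected_component [set A | symmx A /\ F A != 0] 1%:M.

Definition GD_poly n (N : nat) (F : 'M[R]_n -> R) : Prop :=
  [/\ homog_poly_on_sym N F,
      0 < F 1%:M,
      (forall A, symmx A -> real_rooted (fun t => F (t%:M + A)))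
    & (forall A, posdef A -> garding_cone F A)].

Definition orthogonal_mx {n} (g : 'M[R]_n) : Prop := g *m g^T = 1%:M.

Definition real_invariant n (F : 'M[R]_n -> R) : Prop :=
  forall g A, orthogonal_mx g -> symmx A -> F (g *m A *m g^T) = F A.

Definition universal_GD (M N : nat) (p : mpoly.mpoly M R) : Prop :=
  [/\ p \is N.-homog,
      p \is mpoly.symmetric /\ 0 < rv_eval p e_vec,
      (forall m, 0 <= mpoly.mcoeff m p),
      (exists k : R, 0 < k /\ forall j, rv_eval (mpoly.mderiv j p) e_vec = k)
    & (forall lam : 'rV[R]_M, real_rooted (fun t => rv_eval p (t *: e_vec + lam)))].

Definition garding_cone_p M (p : mpoly.mpoly M R) : set 'rV[R]_M :=
  connected_component [set lam | rv_eval p lam != 0] e_vec.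

End GardingDirichlet.

Arguments e_vec {R M}.

(* Both sides of P_F (t I + A) = p (t e + lam^F A) are symmetric polynomials in the roots of
   t |-> F (t I + A), so the I-eigenvalues of P_F are Lam (lam^F A).  The coefficients of
   t |-> F (t I + A), which are F I times the elementary symmetric functions of lam^F A, are fixed
   linear combinations of the values F (j I + A), j = 1, ..., M + 1 (Vandermonde inversion), hence
   polynomials in A; by the fundamental theorem on symmetric polynomials so is P_F, and since P_F is
   N-homogeneous it equals the degree-N part of that polynomial.
   Each Garding cone involved is the set where all eigenvalues are positive: this set is connected
   (the segment from the base point to any of its points stays in it, by homogeneity), and inside
   {F <> 0} it is open and closed, as positivity of all roots of t |-> F (t I + A) is equivalent there
   both to positivity and to nonnegativity of all its coefficients, which depend continuously on A.
   Finally lam^F A > 0 for positive definite A, and then p (t e + lam^F A) > 0 for t >= 0 because p has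
   nonnegative coefficients, so Lam (lam^F A) > 0 too. *)

From HB Require Import structures.
From mathcomp Require Import all_boot all_order all_algebra.
From mathcomp Require Import mpoly perm.
From mathcomp Require Import boolp classical_sets reals topology normedtype.
From mathcomp Require Import matrix_topology.
Import Order.TTheory GRing.Theory Num.Theory.
Import numFieldNormedType.Exports.
Local Open Scope ring_scope.
Local Open Scope classical_set_scope.

Section NodeInterpolation.
Context {R : numFieldType}.

Definition nat_nodes K : 'rV[R]_K := \row_(j < K) j.+1%:R.

Lemma nat_nodes_gt0 K j : 0 < nat_nodes K 0 j.
Proof. by rewrite mxE ltr0Sn. Qed.

Lemma Vandermonde_nat_nodes_unit K : Vandermonde K (nat_nodes K) \in unitmx.
Proof.
rewrite unitmxE det_Vandermonde unitfE.
apply/prodf_neq0 => i _; apply/prodf_neq0 => j ij.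
rewrite !mxE subr_eq0 eq_sym eqr_nat eqSS; apply/eqP => /val_inj ji.
by move: ij; rewrite ji ltnn.
Qed.

Definition interp_weight K : 'M[R]_K := invmx (Vandermonde K (nat_nodes K)).

Lemma coef_interp {K} {q : {poly R}} (k : 'I_K) : (size q <= K)%N ->
  q`_k = \sum_(j < K) q.[nat_nodes K 0 j] * interp_weight K j k.
Proof.
move=> size_q.
have values : \row_j q.[nat_nodes K 0 j] = \row_i q`_i *m Vandermonde K (nat_nodes K).
  apply/rowP => j; rewrite !mxE (horner_coef_wide _ size_q).
  by apply: eq_bigr => i _; rewrite !mxE.
have := congr1 (fun v => (v *m interp_weight K) 0 k) values.
rewrite /interp_weight mulmxK ?Vandermonde_nat_nodes_unit // !mxE => <-.
by apply: eq_bigr => j _; rewrite mxE.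
Qed.

Lemma poly_eq_on_pos (q r : {poly R}) : (forall x, 0 < x -> q.[x] = r.[x]) -> q = r.
Proof.
move=> qr; apply/polyP => k; pose K := maxn (size q) (size r).
have [kK | Kk] := ltnP k K; last first.
  by rewrite !nth_default // (leq_trans _ Kk) ?leq_maxl ?leq_maxr.
rewrite (coef_interp (Ordinal kK) (leq_maxl (size q) (size r))).
rewrite (coef_interp (Ordinal kK) (leq_maxr (size q) (size r))).
by apply: eq_bigr => j _; rewrite qr ?nat_nodes_gt0.
Qed.

End NodeInterpolation.

Section MultivariateEvaluation.
Context {R : comNzRingType} {K : nat}.
Implicit Types (p : {mpoly R[K]}) (w : 'I_K -> R).

Lemma meval_msym p (s : 'S_K) w : (msym s p).@[w] = p.@[fun i => w (s i)].
Proof.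
rewrite [in RHS](mpolyE p) [in LHS](mpolyE p) (raddf_sum (msym s)) !raddf_sum /=.
apply: eq_bigr => m _; rewrite msymZ !mevalZ msymX !mevalX; congr (_ * _).
rewrite (reindex_inj (@perm_inj _ s)) /=; apply: eq_bigr => i _.
by rewrite mnmE permK.
Qed.

Lemma meval_dhomog_scale d p (r : R) w :
  p \is d.-homog -> p.@[fun i => r * w i] = r ^+ d * p.@[w].
Proof.
move=> /dhomogP p_homog; rewrite !mevalE mulr_sumr !big_seq.
apply: eq_bigr => m /p_homog <-; rewrite mulrCA; congr (_ * _).
under eq_bigr do rewrite exprMn.
by rewrite big_split /= prodrXr mdegE.
Qed.

End MultivariateEvaluation.

Lemma rv_eval_sym_eq {R : realType} K (p : {mpoly R[K]}) (u v : 'rV[R]_K) :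
  p \is symmetric ->
  (forall t, \prod_(j < K) (t + u 0 j) = \prod_(j < K) (t + v 0 j)) ->
  rv_eval p u = rv_eval p v.
Proof.
move=> /issymP p_sym uv.
pose su := [tuple - u 0 j | j < K]; pose sv := [tuple - v 0 j | j < K].
have : \prod_(x <- su) ('X - x%:P) = \prod_(x <- sv) ('X - x%:P).
  apply: poly_eq_on_pos => t _; rewrite !horner_prod /= !big_map.
  under eq_bigr do rewrite hornerXsubC opprK.
  by under [RHS]eq_bigr do rewrite hornerXsubC opprK.
move=> /prod_XsubC_eq /tuple_permP [s /val_inj sv_su].
have uv_s i : u 0 i = v 0 (s i).
  have := congr1 (fun t => tnth t i) sv_su; rewrite /= !tnth_mktuple.
  by move/eqP; rewrite eqr_opp => /eqP.
by rewrite /rv_eval -{2}(p_sym s) meval_msym; apply: meval_eq.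
Qed.

Section PolynomialContinuity.
Context {R : realType}.

Lemma meval_continuous (T : topologicalType) K (p : {mpoly R[K]}) (w : T -> 'I_K -> R) :
  (forall i, continuous (w^~ i)) -> continuous (fun x => p.@[w x]).
Proof.
move=> w_cont; under eq_fun do rewrite mevalE.
apply: (continuous_big add_continuous) => m _ x.
apply: (@continuousM R T (fun=> p@_m)); first exact: cst_continuous.
move: x; apply: (continuous_big mul_continuous) => i _.
elim: (m i) => [|k IHk] x; first by under eq_fun do rewrite expr0; exact: cst_continuous.
under eq_fun do rewrite exprS.
by apply: (@continuousM R T (w^~ i)); [exact: w_cont | exact: IHk].
Qed.

Lemma mx_eval_continuous n (q : {mpoly R[n * n]}) : continuous (mx_eval q).
Proof.
apply: meval_continuous => k; case/mxvec_indexP: k => i j.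
by under eq_fun do rewrite mxvecE; exact: coord_continuous.
Qed.

Lemma rv_eval_continuous K (p : {mpoly R[K]}) : continuous (rv_eval p).
Proof. by apply: meval_continuous => k; exact: coord_continuous. Qed.

End PolynomialContinuity.

Section ProductCoefficients.
Context {R : realDomainType} {I : Type}.
Implicit Types (r : seq I) (f : I -> R).

Lemma size_prod_XaddC r f : size (\prod_(i <- r) ('X + (f i)%:P)) = (size r).+1.
Proof.
rewrite (eq_bigr (fun i => 'X - (- f i)%:P)) ?size_prod_XsubC // => i _.
by rewrite polyCN opprK.
Qed.

Lemma coef_prod_XaddC_ge0 r f k : (forall i, 0 <= f i) ->
  0 <= (\prod_(i <- r) ('X + (f i)%:P))`_k.
Proof.
move=> f_ge0; elim: r k => [|i r IHr] k; first by rewrite big_nil coef1; case: eqP.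
rewrite big_cons mulrDl coefD coefXM coefCM.
by apply: addr_ge0; [case: eqP | apply: mulr_ge0].
Qed.

Lemma coef_prod_XaddC_gt0 r f k : (forall i, 0 < f i) -> (k <= size r)%N ->
  0 < (\prod_(i <- r) ('X + (f i)%:P))`_k.
Proof.
move=> f_gt0; have f_ge0 i := ltW (f_gt0 i).
elim: r k => [|i r IHr] [|k] //=; rewrite ?big_nil ?coef1 ?ltr01 // => k_le.
  rewrite big_cons mulrDl coefD coefXM coefCM /= add0r.
  by apply: mulr_gt0 => //; apply: IHr.
rewrite big_cons mulrDl coefD coefXM coefCM /=.
by apply: ltr_pwDl; [apply: IHr | apply: mulr_ge0 => //; exact: coef_prod_XaddC_ge0].
Qed.

Lemma horner_ge_coef0 (q : {poly R}) x : (forall k, 0 <= q`_k) -> 0 <= x -> q`_0 <= q.[x].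
Proof.
move=> q_ge0 x_ge0; rewrite horner_coef.
case size_q: (size q) => [|s].
  by move/eqP: size_q; rewrite size_poly_eq0 big_ord0 => /eqP ->; rewrite coef0.
rewrite big_ord_recl expr0 mulr1 lerDl.
by apply: sumr_ge0 => k _; apply: mulr_ge0 => //; exact: exprn_ge0.
Qed.

(* A nonnegative zero -f i of the product would contradict q.[-f i] >= q`_0 = \prod f > 0. *)
Lemma prod_XaddC_roots_gt0 (J : eqType) (r : seq J) (f : J -> R) :
  (forall k, 0 <= (\prod_(i <- r) ('X + (f i)%:P))`_k) -> \prod_(i <- r) f i != 0 ->
  forall i, i \in r -> 0 < f i.
Proof.
set q := \prod_(i <- r) _ => q_ge0 prod_neq0 i ir; rewrite ltNge; apply/negP => fi_le0.
have q0 : q`_0 = \prod_(i <- r) f i.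
  by rewrite -horner_coef0 horner_prod; under eq_bigr do rewrite hornerD hornerX hornerC add0r.
have q0_gt0 : 0 < q`_0 by rewrite lt0r q0 prod_neq0 -q0 q_ge0.
have q_root : q.[- f i] = 0.
  by rewrite horner_prod (big_rem i) //= hornerD hornerX hornerC addNr mul0r.
have := @horner_ge_coef0 q (- f i) q_ge0; rewrite oppr_ge0 q_root => /(_ fi_le0).
by rewrite leNgt q0_gt0.
Qed.

End ProductCoefficients.

Lemma size_index_enum_ord d : size (index_enum 'I_d) = d.
Proof. by rewrite [index_enum _]unlock -enumT size_enum_ord. Qed.

Section ComponentOfPositiveEigenvalues.
Context {R : realType} {V : normedModType R}.
Variables (S : set V) (e : V) (P Q : V -> R) (d : nat) (L : V -> 'I_d -> R).
Hypothesis S_e : S e.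
Hypothesis S_shift : forall x t, S x -> S (t *: e + x).
Hypothesis S_scale : forall x r, S x -> S (r *: x).
Hypothesis P_e_gt0 : 0 < P e.
Hypothesis P_factor : forall x t, S x -> P (t *: e + x) = P e * \prod_(j < d) (t + L x j).
Hypothesis P_scale : forall x r, S x -> 0 < r -> P (r *: x) = r ^+ d * P x.
Hypothesis P_eq_Q : forall x, S x -> P x = Q x.
Hypothesis Q_cont : continuous Q.

Let eigen_poly x : {poly R} := \prod_(j < d) ('X + (L x j)%:P).

Let size_eigen_poly x : size (eigen_poly x) = d.+1.
Proof. by rewrite size_prod_XaddC size_index_enum_ord. Qed.

(* The coefficients of t |-> P (t e + x), recovered from its values at t = 1, ..., d + 1;
   unlike L, they are continuous in x. *)
Let eigen_coef (k : 'I_d.+1) x : R :=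
  \sum_(j < d.+1) Q (nat_nodes d.+1 0 j *: e + x) * interp_weight d.+1 j k.

Let eigen_coefE k x : S x -> eigen_coef k x = P e * (eigen_poly x)`_k.
Proof.
move=> Sx; rewrite -coefZ (coef_interp k); last first.
  by rewrite (leq_trans (size_scale_leq _ _)) ?size_eigen_poly.
apply: eq_bigr => j _; rewrite hornerZ horner_prod -P_eq_Q ?P_factor //; last exact: S_shift.
by congr (_ * _ * _); apply: eq_bigr => i _; rewrite hornerD hornerX hornerC.
Qed.

Let eigen_coef_continuous k : continuous (eigen_coef k).
Proof.
apply: (continuous_big add_continuous) => j _ x.
apply: (@continuousM R V (fun x => Q (nat_nodes d.+1 0 j *: e + x)) (fun=> _)).
  apply: (@continuous_comp V V R (fun x => nat_nodes d.+1 0 j *: e + x) Q); last exact: Q_cont.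
  by apply: (@continuousD R V V (fun=> _) id); first exact: cst_continuous.
exact: cst_continuous.
Qed.

Let L_e_gt0 j : 0 < L e j.
Proof.
rewrite ltNge; apply/negP => Le_le0; set t := - L e j.
have t_ge0 : 0 <= t by rewrite oppr_ge0.
have : P (t *: e + e) = (t + 1) ^+ d * P e.
  by rewrite -{2}(scale1r e) -scalerDl P_scale // ltr_wpDl.
rewrite P_factor // (bigD1 j) //= addNr mul0r mulr0 => /esym/eqP.
by rewrite mulf_eq0 expf_eq0 !gt_eqF ?ltr_wpDl // andbF.
Qed.

Let eigen_coef_gt0 x k : S x -> (forall j, 0 < L x j) -> 0 < eigen_coef k x.
Proof.
move=> Sx L_gt0; rewrite eigen_coefE // mulr_gt0 // coef_prod_XaddC_gt0 //.
by rewrite size_index_enum_ord -ltnS.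
Qed.

Let eigen_gt0_of_coef_ge0 x : S x -> P x != 0 ->
  (forall k, 0 <= eigen_coef k x) -> forall j, 0 < L x j.
Proof.
move=> Sx Px_neq0 coef_ge0 j.
apply: (@prod_XaddC_roots_gt0 _ _ (index_enum 'I_d)); last exact: mem_index_enum.
  move=> k; have [kd | dk] := ltnP k d.+1; last by rewrite nth_default ?size_eigen_poly.
  by rewrite -(pmulr_rge0 _ P_e_gt0) -(eigen_coefE (Ordinal kd)).
apply: contra Px_neq0 => /eqP prod_eq0.
have := @P_factor x 0 Sx; rewrite scale0r add0r => ->.
by under eq_bigr do rewrite add0r; rewrite prod_eq0 mulr0.
Qed.

(* Inside {S, P <> 0}, positivity of all L x j is both open and closed, being
   equivalent to both (forall k, 0 < eigen_coef k x) and (forall k, 0 <= eigen_coef k x). *)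
Let component_sub_eigen_gt0 :
  connected_component [set x | S x /\ P x != 0] e `<=` [set x | S x /\ forall j, 0 < L x j].
Proof.
move=> y [C [Ce C_sub C_conn] Cy]; pose G := [set x | forall j, 0 < L x j].
suff CG : C `&` G = C by split; [have [] := C_sub y Cy | have [] : (C `&` G) y by rewrite CG].
apply: C_conn; first by exists e.
- exists [set x | forall k, 0 < eigen_coef k x].
    rewrite openE => x x_pos; apply: filter_forall => k.
    apply: (eigen_coef_continuous k x [set z | 0 < z]); apply: open_nbhs_nbhs.
    by split; [exact: open_gt | exact: x_pos].
  apply/seteqP; split => x [Cx Gx]; split => //; have [Sx Px] := C_sub x Cx.
    by move=> k; exact: eigen_coef_gt0.
  by apply: eigen_gt0_of_coef_ge0 => // k; exact: ltW.
- exists (\bigcap_(k in setT) (eigen_coef k @^-1` [set z | 0 <= z])).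
    apply: closed_bigI => k _; apply: preimage_closed; last exact: closed_ge.
    by move=> x _; exact: eigen_coef_continuous.
  apply/seteqP; split => x [Cx Gx]; split => //; have [Sx Px] := C_sub x Cx.
    by move=> k _; apply: ltW; exact: eigen_coef_gt0.
  by apply: eigen_gt0_of_coef_ge0 => // k; exact: Gx.
Qed.

(* The segment [e, y] stays in the component: r y + (1 - r) e = r ((1 - r) / r e + y). *)
Let eigen_gt0_sub_component :
  [set x | S x /\ forall j, 0 < L x j] `<=` connected_component [set x | S x /\ P x != 0] e.
Proof.
move=> y [Sy Ly_gt0]; pose f r := r *: y + (1 - r) *: e.
have f0 : f 0 = e by rewrite /f scale0r add0r subr0 scale1r.
have f1 : f 1 = y by rewrite /f scale1r subrr scale0r addr0.
exists (f @` `[0, 1]); last by exists 1 => //=; rewrite in_itv /= ler01 lexx.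
split; first by exists 0 => //=; rewrite in_itv /= ler01 lexx.
- move=> z [r]; rewrite /= in_itv /= => /andP [r_ge0 r_le1] <-.
  have [<-|r_neq0] := eqVneq 0 r; first by rewrite f0; split => //; rewrite gt_eqF.
  have r_gt0 : 0 < r by rewrite lt0r eq_sym r_neq0.
  have -> : f r = r *: (((1 - r) / r) *: e + y).
    by rewrite /f scalerDr scalerA [r * _]mulrC divfK ?gt_eqF // addrC.
  split; first by apply/S_scale/S_shift.
  rewrite P_scale ?P_factor //; last exact: S_shift.
  rewrite gt_eqF // !mulr_gt0 ?exprn_gt0 //; apply: prodr_gt0 => j _.
  by apply: ltr_wpDl; [rewrite divr_ge0 ?subr_ge0 | exact: Ly_gt0].
- apply: connected_continuous_connected; first exact: segment_connected.
  apply: continuous_subspaceT => r.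
  apply: (@continuousD R V R (fun r => r *: y) (fun r => (1 - r) *: e)).
    exact: (@continuousZr_tmp R V R id y r).
  apply: (@continuousZr_tmp R V R (fun r => 1 - r) e r).
  by apply: (@continuousB R R^o R (fun=> 1) id r); first exact: cst_continuous.
Qed.

Lemma connected_component_eigen_gt0 :
  connected_component [set x | S x /\ P x != 0] e = [set x | S x /\ forall j, 0 < L x j].
Proof.
by rewrite eqEsubset; split; [exact: component_sub_eigen_gt0 | exact: eigen_gt0_sub_component].
Qed.

End ComponentOfPositiveEigenvalues.

Lemma coef_prod_XaddC_mesym {R : idomainType} M (u : 'I_M -> R) k : (k <= M)%N ->
  (\prod_(j < M) ('X + (u j)%:P))`_(M - k) = (mesym M R k).@[u].
Proof.
move=> kM; pose cs := [tuple - u j | j < M].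
have -> : \prod_(j < M) ('X + (u j)%:P) = \prod_(c <- cs) ('X - c%:P).
  by rewrite /= big_map enumT; apply: eq_bigr => j _; rewrite polyCN opprK.
have /= -> := mroots_coeff cs (Ordinal (kM : (k < M.+1)%N)).
have -> : (mesym M R k).@[tnth cs] = (-1) ^+ k * (mesym M R k).@[u].
  rewrite -meval_dhomog_scale ?dhomog_mesym //.
  by apply: meval_eq => i; rewrite tnth_mktuple mulN1r.
by rewrite mulrA -exprMn mulrNN mulr1 expr1n mul1r.
Qed.

Section SymmetricMatrices.
Context {R : realType} {n : nat}.
Implicit Types (A B g : 'M[R]_n) (q : {mpoly R[n * n]}).

Lemma symmxD A B : symmx A -> symmx B -> symmx (A + B).
Proof. by rewrite /symmx linearD /= => -> ->. Qed.

Lemma symmxZ r A : symmx A -> symmx (r *: A).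
Proof. by rewrite /symmx linearZ /= => ->. Qed.

Lemma symmx_scalar (r : R) : symmx (r%:M : 'M[R]_n).
Proof. exact: tr_scalar_mx. Qed.

Lemma symmx_shift (t : R) A : symmx A -> symmx (t%:M + A).
Proof. exact/symmxD/symmx_scalar. Qed.

Lemma symmx_conj g A : symmx A -> symmx (g *m A *m g^T).
Proof. by rewrite /symmx !trmx_mul trmxK mulmxA => ->. Qed.

Lemma mx_eval_dhomog {d q} r A :
  q \is d.-homog -> mx_eval q (r *: A) = r ^+ d * mx_eval q A.
Proof.
move=> q_homog; rewrite /mx_eval -meval_dhomog_scale //.
by apply: meval_eq => i; rewrite linearZ /= mxE.
Qed.

Definition shift_tuple (a : R) : (n * n).-tuple {mpoly R[n * n]} :=
  [tuple 'X_i + (a * mxvec (1%:M : 'M[R]_n) 0 i)%:MP | i < n * n].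

Lemma mx_eval_shift q a A : mx_eval (q \mPo shift_tuple a) A = mx_eval q (a%:M + A).
Proof.
rewrite /mx_eval comp_mpoly_meval; apply: meval_eq => i.
rewrite tnth_mktuple mevalD mevalXU mevalC -[a%:M]scalemx1.
by rewrite linearD linearZ /= !mxE addrC.
Qed.

Lemma coef_mx_eval_shift q (c : 'M[R]_n -> {poly R}) K (k : 'I_K) :
  (forall A, symmx A -> size (c A) <= K)%N ->
  (forall A t, symmx A -> (c A).[t] = mx_eval q (t%:M + A)) ->
  exists ck, forall A, symmx A -> mx_eval ck A = (c A)`_k.
Proof.
move=> c_size c_val.
exists (\sum_(j < K) interp_weight K j k *: (q \mPo shift_tuple (nat_nodes K 0 j))).
move=> A sA; rewrite (coef_interp k (c_size A sA)) /mx_eval raddf_sum /=.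
by apply: eq_bigr => j _; rewrite mevalZ -/(mx_eval _ A) mx_eval_shift c_val // mulrC.
Qed.

End SymmetricMatrices.

Lemma rv_eval_dhomog {R : realType} {M d} {p : {mpoly R[M]}} r (v : 'rV[R]_M) :
  p \is d.-homog -> rv_eval p (r *: v) = r ^+ d * rv_eval p v.
Proof.
by move=> p_homog; rewrite /rv_eval -meval_dhomog_scale //; apply: meval_eq => i; rewrite mxE.
Qed.

Lemma meval_gt0 {R : realDomainType} K (p : {mpoly R[K]}) (w : 'I_K -> R) :
  (forall m, 0 <= p@_m) -> p != 0 -> (forall i, 0 < w i) -> 0 < p.@[w].
Proof.
move=> p_ge0 p_neq0 w_gt0; rewrite mevalE.
have term_ge0 m : 0 <= p@_m * \prod_i w i ^+ m i.
  by rewrite mulr_ge0 // prodr_ge0 // => i _; rewrite exprn_ge0 // ltW.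
have supp_neq0 : msupp p != [::] by rewrite msupp_eq0.
have [m m_supp] : exists m, m \in msupp p.
  by case: (msupp p) supp_neq0 => // m s _; exists m; rewrite mem_head.
rewrite (big_rem m) //= ltr_wpDr ?sumr_ge0 // mulr_gt0 ?prodr_gt0 // => [|i _].
  by rewrite lt0r -mcoeff_msupp m_supp p_ge0.
by rewrite exprn_gt0.
Qed.

Lemma real_rooted_factor {R : realType} (g : R -> R) c d (r : 'I_d -> R) :
  (forall t, g t = c * \prod_(j < d) (t + r j)) -> real_rooted g.
Proof.
move=> g_factor; exists c, [seq - r j | j <- enum 'I_d] => t.
by rewrite g_factor big_map enumT; under [in RHS]eq_bigr do rewrite opprK.
Qed.

Lemma homog_poly_on_sym_of_scale {R : realType} {n N} {G : 'M[R]_n -> R} {q} :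
  (forall A, symmx A -> G A = mx_eval q A) ->
  (forall A r, symmx A -> 0 < r -> G (r *: A) = r ^+ N * G A) ->
  homog_poly_on_sym N G.
Proof.
move=> G_q G_scale; exists (pihomog mdeg N q); split; first exact: pihomogP.
move=> A sA; pose D := (msize q + N.+1)%N.
pose parts := \poly_(i < D) mx_eval (pihomog mdeg i q) A.
have : parts = G A *: 'X^N.
  apply: poly_eq_on_pos => r r_gt0.
  rewrite hornerZ hornerXn mulrC -G_scale // G_q; last exact: symmxZ.
  rewrite /parts horner_poly.
  rewrite [in RHS](pihomog_partitionE (leq_addr N.+1 (msize q))) /mx_eval raddf_sum /=.
  by apply: eq_bigr => i _; rewrite -!/(mx_eval _ _) (mx_eval_dhomog _ _ (pihomogP mdeg i q)) mulrC.
move=> /(congr1 (fun s : {poly R} => s`_N)); rewrite coef_poly coefZ coefXn eqxx mulr1.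
by rewrite ifT // /D addnS ltnS leq_addl.
Qed.

Lemma garding_cone_eigen_gt0 {R : realType} {n d} {G : 'M[R]_n -> R} {q}
    {L : 'M[R]_n -> 'I_d -> R} :
  0 < G 1%:M ->
  (forall A, symmx A -> forall t, G (t%:M + A) = G 1%:M * \prod_(j < d) (t + L A j)) ->
  (forall A r, symmx A -> 0 < r -> G (r *: A) = r ^+ d * G A) ->
  (forall A, symmx A -> G A = mx_eval q A) ->
  garding_cone G = [set A | symmx A /\ forall j, 0 < L A j].
Proof.
move=> G1_gt0 G_factor G_scale G_q; rewrite /garding_cone.
apply: (@connected_component_eigen_gt0 R 'M[R]_n (@symmx R n) 1%:M G (mx_eval q)) => //.
- exact: symmx_scalar.
- by move=> A t sA; rewrite scalemx1; exact: symmx_shift.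
- by move=> A r sA; exact: symmxZ.
- by move=> A t sA; rewrite scalemx1 G_factor.
- exact: mx_eval_continuous.
Qed.

Section UniversalPolynomial.
Context {R : realType} {M N : nat} {p : {mpoly R[M]}} {Lam : 'rV[R]_M -> 'rV[R]_N}.
Hypothesis pe_gt0 : 0 < rv_eval p e_vec.
Hypothesis p_factor : forall lam t,
  rv_eval p (t *: e_vec + lam) = rv_eval p e_vec * \prod_(j < N) (t + Lam lam 0 j).

Lemma garding_cone_p_eigen_gt0 : p \is N.-homog ->
  garding_cone_p p = [set lam | forall j, 0 < Lam lam 0 j].
Proof.
move=> p_homog; rewrite /garding_cone_p.
have -> : [set lam | rv_eval p lam != 0] = [set lam | setT lam /\ rv_eval p lam != 0].
  by apply/seteqP; split => lam //= [].
rewrite (@connected_component_eigen_gt0 _ _ setT e_vec _ (rv_eval p) _ (fun v j => Lam v 0 j)) //.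
- by apply/seteqP; split => lam //= [].
- by move=> x r _ _; rewrite (rv_eval_dhomog _ _ p_homog).
- exact: rv_eval_continuous.
Qed.

Lemma eigen_gt0_of_pos : (forall m, 0 <= p@_m) ->
  forall lam : 'rV[R]_M, (forall i, 0 < lam 0 i) -> forall j, 0 < Lam lam 0 j.
Proof.
move=> p_ge0 lam lam_gt0 j; rewrite ltNge; apply/negP => Lam_le0.
have := p_factor lam (- Lam lam 0 j); rewrite (bigD1 j) //= addNr mul0r mulr0.
apply/eqP; rewrite gt_eqF // meval_gt0 //.
  by apply: contraTneq pe_gt0 => ->; rewrite /rv_eval meval0 ltxx.
by move=> i; rewrite !mxE mulr1 ltr_wpDl // oppr_ge0.
Qed.

End UniversalPolynomial.

Section EigenvalueMap.
Context {R : realType} {n M : nat}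
  {F : 'M[R]_n -> R} {lamF : 'M[R]_n -> 'rV[R]_M} {qF : {mpoly R[n * n]}}.
Hypothesis qF_homog : qF \is M.-homog.
Hypothesis F_qF : forall A, symmx A -> F A = mx_eval qF A.
Hypothesis F1_gt0 : 0 < F 1%:M.
Hypothesis F_factor : forall A, symmx A -> forall t,
  F (t%:M + A) = F 1%:M * \prod_(j < M) (t + lamF A 0 j).

Lemma F_scale A r : symmx A -> F (r *: A) = r ^+ M * F A.
Proof. by move=> sA; rewrite !F_qF ?(mx_eval_dhomog _ _ qF_homog) //; exact: symmxZ. Qed.

Lemma mesym_eigen_poly k : (k <= M)%N ->
  exists c, forall A, symmx A -> mx_eval c A = (mesym M R k).@[fun i => lamF A 0 i].
Proof.
move=> kM.
case: (@coef_mx_eval_shift R n ((F 1%:M)^-1 *: qF)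
  (fun A => \prod_(j < M) ('X + (lamF A 0 j)%:P)) M.+1 (inord (M - k))).
- by move=> A _; rewrite size_prod_XaddC size_index_enum_ord.
- move=> A t sA; rewrite /mx_eval mevalZ -/(mx_eval _ _) -F_qF; last exact: symmx_shift.
  rewrite F_factor // mulKf ?lt0r_neq0 // horner_prod.
  by apply: eq_bigr => j _; rewrite hornerD hornerX hornerC.
move=> c cE; exists c => A sA; rewrite cE // inordK ?ltnS ?leq_subr //.
exact: coef_prod_XaddC_mesym.
Qed.

Lemma sym_eigen_poly {p : {mpoly R[M]}} : p \is symmetric ->
  exists q, forall A, symmx A -> rv_eval p (lamF A) = mx_eval q A.
Proof.
move=> p_sym; have /choice [c cE] : forall i : 'I_M, exists c, forall A, symmx A ->
    mx_eval c A = (mesym M R i.+1).@[fun j => lamF A 0 j].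
  by move=> i; exact: mesym_eigen_poly.
have [t [tE _]] := sym_fundamental p_sym.
exists (t \mPo [tuple c i | i < M]) => A sA.
rewrite /mx_eval comp_mpoly_meval /rv_eval -tE comp_mpoly_meval.
by apply: meval_eq => i; rewrite !tnth_mktuple -cE.
Qed.

Section SymmetricFunctionOfEigenvalues.
Context {p : {mpoly R[M]}}.
Hypothesis p_sym : p \is symmetric.

Lemma rv_eval_eigen_eq A (u : 'rV[R]_M) : symmx A ->
  (forall t, F (t%:M + A) = F 1%:M * \prod_(j < M) (t + u 0 j)) ->
  rv_eval p (lamF A) = rv_eval p u.
Proof.
move=> sA u_factor; apply: rv_eval_sym_eq => // t.
by apply: (mulfI (lt0r_neq0 F1_gt0)); rewrite -F_factor // u_factor.
Qed.

Lemma rv_eval_eigen_one : rv_eval p (lamF 1%:M) = rv_eval p e_vec.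
Proof.
apply: rv_eval_eigen_eq; first exact: symmx_scalar.
move=> t; have -> : t%:M + 1%:M = (t + 1) *: (1%:M : 'M[R]_n) by rewrite scalemx1 raddfD.
rewrite F_scale; last exact: symmx_scalar.
by rewrite mulrC (eq_bigr (fun=> t + 1)) ?prodr_const ?card_ord // => j _; rewrite mxE.
Qed.

Lemma rv_eval_eigen_shift A t : symmx A ->
  rv_eval p (lamF (t%:M + A)) = rv_eval p (t *: e_vec + lamF A).
Proof.
move=> sA; apply: rv_eval_eigen_eq; first exact: symmx_shift.
move=> s; rewrite addrA -raddfD /= F_factor //; congr (_ * _).
by apply: eq_bigr => j _; rewrite !mxE mulr1 addrA.
Qed.

Lemma rv_eval_eigen_scale A r : symmx A -> r != 0 ->
  rv_eval p (lamF (r *: A)) = rv_eval p (r *: lamF A).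
Proof.
move=> sA r_neq0; apply: rv_eval_eigen_eq; first exact: symmxZ.
move=> s; have -> : s%:M + r *: A = r *: ((s / r)%:M + A).
  by rewrite scalerDr scale_scalar_mx mulrC divfK.
rewrite F_scale; last exact: symmx_shift.
have -> : r ^+ M = \prod_(j < M) r by rewrite prodr_const card_ord.
rewrite F_factor // mulrCA -big_split /=; congr (_ * _); apply: eq_bigr => j _.
by rewrite !mxE mulrDr mulrC divfK.
Qed.

Lemma rv_eval_eigen_conj g A : real_invariant F -> orthogonal_mx g -> symmx A ->
  rv_eval p (lamF (g *m A *m g^T)) = rv_eval p (lamF A).
Proof.
move=> F_inv g_orth sA; apply: rv_eval_eigen_eq; first exact: symmx_conj.
move=> s; rewrite -F_factor // -(F_inv g _ g_orth (symmx_shift s _ sA)).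
by rewrite mulmxDr mulmxDl mul_mx_scalar -scalemxAl g_orth scalemx1.
Qed.

End SymmetricFunctionOfEigenvalues.

End EigenvalueMap.

Theorem theorem7p4 (R : realType) (n M N : nat)
  (F : 'M[R]_n -> R) (lamF : 'M[R]_n -> 'rV[R]_M)
  (p : mpoly.mpoly M R) (Lam : 'rV[R]_M -> 'rV[R]_N) :
  GD_poly M F ->
  (forall A, symmx A -> forall t : R,
      F (t%:M + A) = F 1%:M * \prod_(j < M) (t + lamF A 0 j)) ->
  universal_GD N p ->
  (forall (lam : 'rV[R]_M) (t : R),
      rv_eval p (t *: e_vec + lam) = rv_eval p e_vec * \prod_(j < N) (t + Lam lam 0 j)) ->
  let PF := fun A : 'M[R]_n => rv_eval p (lamF A) in
  [/\ GD_poly N PF,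
      (forall A, symmx A -> forall t : R,
          PF (t%:M + A) = PF 1%:M * \prod_(j < N) (t + Lam (lamF A) 0 j)),
      garding_cone PF = [set A | symmx A /\ garding_cone_p p (lamF A)]
    & (real_invariant F -> real_invariant PF)].
Proof.
move=> [[qF [qF_homog F_qF]] F1_gt0 _ F_cone] F_factor.
move=> [p_homog [p_sym pe_gt0] p_ge0 _ _] p_factor PF.
have PF1 : PF 1%:M = rv_eval p e_vec := rv_eval_eigen_one qF_homog F_qF F1_gt0 F_factor p_sym.
have PF_factor A : symmx A -> forall t,
    PF (t%:M + A) = PF 1%:M * \prod_(j < N) (t + Lam (lamF A) 0 j).
  by move=> sA t; rewrite PF1 /PF (rv_eval_eigen_shift F1_gt0 F_factor p_sym) // p_factor.
have PF_scale A r : symmx A -> 0 < r -> PF (r *: A) = r ^+ N * PF A.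
  move=> sA r_gt0; rewrite /PF (rv_eval_eigen_scale qF_homog F_qF F1_gt0 F_factor p_sym) ?gt_eqF //.
  exact: (rv_eval_dhomog _ _ p_homog).
have [q PF_q] := sym_eigen_poly F_qF F1_gt0 F_factor p_sym.
have PF1_gt0 : 0 < PF 1%:M by rewrite PF1.
have PF_cone := garding_cone_eigen_gt0 PF1_gt0 PF_factor PF_scale PF_q.
split => //; last by move=> F_inv g A g_orth sA; exact: (rv_eval_eigen_conj F1_gt0 F_factor p_sym).
- split; [exact: homog_poly_on_sym_of_scale PF_q PF_scale | exact: PF1_gt0 | |].
  + by move=> A sA; apply: real_rooted_factor => t; exact: PF_factor.
  move=> A /F_cone; rewrite (garding_cone_eigen_gt0 F1_gt0 F_factor _ F_qF) => [|B r sB _].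
    rewrite PF_cone => -[sA lam_gt0]; split => //.
    exact: (eigen_gt0_of_pos pe_gt0 p_factor p_ge0).
  exact: (F_scale qF_homog F_qF).
- by rewrite PF_cone (garding_cone_p_eigen_gt0 pe_gt0 p_factor p_homog).
Qed.
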